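(* Let $p\in\mathbb{R}_{\ge0}^n$ and $w\in\mathbb{R}_{\ge0}^n$ be arbitrary and let $t\ge0$. Then either $\Lambda(t)=\infty$ or there exists an index $i\in\{1,\ldots,n\}$ such that $\Lambda(t)=\Lambda^i(t)$.
   Context: Let $x^\star$ be a solution maximizing $p^{\mathsf T}x$ over $\{x\in\{0,1\}^n: w^{\mathsf T}x\le t\}$ (the winner), and let $\hat{x}$ be a solution minimizing $w^{\mathsf T}x$ over $\{x\in\{0,1\}^n: p^{\mathsf T}x>p^{\mathsf T}x^\star\}$ (the loser of smallest weight), with $\hat{x}=\perp$ if this set is empty. Define $\Lambda(t)=w^{\mathsf T}\hat{x}-t$ if $\hat{x}\ne\perp$ and $\Lambda(t)=\infty$ otherwise. For $i\in\{1,\ldots,n\}$ and $j\in\{0,1\}$ let $\mathcal{S}^{x_i=j}=\{x\in\{0,1\}^n: x_i=j\}$; let $x^{\star,i}$ maximize $p^{\mathsf T}x$ over $\{x\in\mathcal{S}^{x_i=0}: w^{\mathsf T}x\le t\}$, and let $\hat{x}^i$ minimize $w^{\mathsf T}x$ over $\{x\in\mathcal{S}^{x_i=1}: p^{\mathsf T}x>p^{\mathsf T}x^{\star,i}\}$, with $\hat{x}^i=\perp$ if this set is empty. Define $\Lambda^i(t)=w^{\mathsf T}\hat{x}^i-t$ if $\hat{x}^i\ne\perp$ and $\Lambda^i(t)=\infty$ otherwise. (These values do not depend on how ties in the argmax/argmin are broken.) *)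

From HB Require Import structures.
From mathcomp Require Import all_boot all_order all_algebra.
Set Implicit Arguments. Unset Strict Implicit. Unset Printing Implicit Defensive.
Import Order.TTheory GRing.Theory Num.Theory.
Local Open Scope ring_scope.

Section Knap.
Variables (R : realFieldType) (n : nat).

Notation bvec := {ffun 'I_n -> bool}.

Definition dotb (c : 'I_n -> R) (x : bvec) : R :=
  \sum_(i < n) (if x i then c i else 0).

Definition bzero : bvec := [ffun _ => false].

(* a maximizer of p^T x over the feasible set {x | P x, w^T x <= t};
   the all-zero vector is feasible whenever P bzero, w >= 0, t >= 0 *)
Definition winner (p w : 'I_n -> R) (t : R) (P : pred bvec) : bvec :=
  Order.arg_max bzero (fun x : bvec => P x && (dotb w x <= t)) (dotb p).

(* Lambda-value: w^T xhat - t where xhat minimizes w^T x over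
   {x | P x, p^T x > p^T xstar}; None encodes infinity (empty set). *)
Definition LambdaP (p w : 'I_n -> R) (t : R) (Pw Pl : pred bvec) : option R :=
  let ps := dotb p (winner p w t Pw) in
  match [pick x | Pl x && (ps < dotb p x)] with
  | Some x0 => Some (dotb w (Order.arg_min x0 (fun x : bvec => Pl x && (ps < dotb p x)) (dotb w)) - t)
  | None => None
  end.

Definition Lambda (p w : 'I_n -> R) (t : R) : option R :=
  LambdaP p w t predT predT.

Definition Lambda_i (p w : 'I_n -> R) (t : R) (i : 'I_n) : option R :=
  LambdaP p w t (fun x : bvec => ~~ x i) (fun x : bvec => x i).

End Knap.

From HB Require Import structures.
From mathcomp Require Import all_boot all_order all_algebra.

Set Implicit Arguments.
Unset Strict Implicit.
Unset Printing Implicit Defensive.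
Import Order.TTheory GRing.Theory Num.Theory.
Local Open Scope ring_scope.

(* Let a be a loser of smallest weight. Since p >= 0 and p^T a > p^T x*, the
   support of a is not contained in that of x*: pick i with a_i = 1, x*_i = 0.
   Then x* is still feasible in S^{x_i=0}, so the restricted winner has the same
   profit, and a is a loser in S^{x_i=1}; as S^{x_i=1} has fewer losers, a is a
   loser of smallest weight there too, hence Lambda(t) = Lambda^i(t). *)

Section Knapsack.
Variables (R : realFieldType) (n : nat).
Notation bvec := {ffun 'I_n -> bool}.

Lemma dotb0 (c : 'I_n -> R) : dotb c (bzero n) = 0.
Proof. by rewrite /dotb big1 // => i _; rewrite ffunE. Qed.

Lemma dotb_subset (c : 'I_n -> R) (x y : bvec) :
  (forall i, 0 <= c i) -> (forall i, y i -> x i) -> dotb c y <= dotb c x.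
Proof.
move=> c0 yx; apply: ler_sum => i _.
by case: (boolP (y i)) => [/yx -> | _]; case: (x i).
Qed.

Lemma dotb_lt_support (c : 'I_n -> R) (x y : bvec) :
  (forall i, 0 <= c i) -> dotb c x < dotb c y -> exists2 i, y i & ~~ x i.
Proof.
move=> c0 lt_xy; suff /existsP[i /andP[yi xi]] : [exists i, y i && ~~ x i].
  by exists i.
apply: contraLR lt_xy; rewrite negb_exists -leNgt => /forallP notyx.
apply: dotb_subset => // i yi; apply: contraT => xi.
by have := notyx i; rewrite yi xi.
Qed.

Variables (p w : 'I_n -> R) (t : R).
Hypothesis t_ge0 : 0 <= t.

Section Winner.
Variable P : pred bvec.
Hypothesis P0 : P (bzero n).

Lemma winner_feasible : P (winner p w t P) && (dotb w (winner p w t P) <= t).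
Proof. by rewrite /winner; case: arg_maxP => //=; rewrite P0 dotb0. Qed.

Lemma winner_max (y : bvec) :
  P y -> dotb w y <= t -> dotb p y <= dotb p (winner p w t P).
Proof.
move=> Py wy; rewrite /winner; case: arg_maxP => [|z _ zmax].
  by rewrite /= P0 dotb0.
by apply: zmax; rewrite Py.
Qed.

End Winner.

Lemma winner_restrict (P : pred bvec) :
  P (bzero n) -> P (winner p w t predT) ->
  dotb p (winner p w t P) = dotb p (winner p w t predT).
Proof.
move=> P0 Pxs; have /andP[_ wxs] := winner_feasible (P := predT) isT.
have /andP[_ wxP] := winner_feasible P0.
by apply/le_anti; rewrite !winner_max.
Qed.

Definition loser (Pw Pl : pred bvec) : pred bvec :=
  fun x => Pl x && (dotb p (winner p w t Pw) < dotb p x).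

Definition min_loser (Pw Pl : pred bvec) (x : bvec) : Prop :=
  loser Pw Pl x /\ forall y, loser Pw Pl y -> dotb w x <= dotb w y.

Lemma LambdaP_min_loser Pw Pl x :
  min_loser Pw Pl x -> LambdaP p w t Pw Pl = Some (dotb w x - t).
Proof.
move=> [lossx xmin]; rewrite /LambdaP.
case: pickP => [x0 x0P | /(_ x)]; last by move: lossx; rewrite /loser => ->.
have [z lossz zmin] := arg_minP (dotb w) (P := loser Pw Pl) x0P.
by congr (Some (_ - _)); apply/le_anti; rewrite xmin // zmin.
Qed.

Lemma LambdaP_None_or_min_loser Pw Pl :
  LambdaP p w t Pw Pl = None \/ exists x, min_loser Pw Pl x.
Proof.
rewrite /LambdaP; case: pickP => [x0 x0P | _]; [right | by left].
have [z lossz zmin] := arg_minP (dotb w) (P := loser Pw Pl) x0P.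
by exists z; split.
Qed.

Lemma min_loser_restrict (Pw Pl Pw' Pl' : pred bvec) x :
  dotb p (winner p w t Pw') = dotb p (winner p w t Pw) ->
  (forall y, Pl' y -> Pl y) -> Pl' x -> min_loser Pw Pl x -> min_loser Pw' Pl' x.
Proof.
move=> eq_ps sub Pl'x [/andP[_ lossx] xmin].
have loser_sub y : loser Pw' Pl' y -> loser Pw Pl y.
  by rewrite /loser eq_ps => /andP[/sub -> ->].
by split=> [|y /loser_sub /xmin //]; rewrite /loser eq_ps Pl'x.
Qed.

End Knapsack.

Theorem lemma2p6 (R : realFieldType) (n : nat) (p w : 'I_n -> R) (t : R) :
  (forall i, 0 <= p i) -> (forall i, 0 <= w i) -> 0 <= t ->
  Lambda p w t = None \/ exists i : 'I_n, Lambda p w t = Lambda_i p w t i.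
Proof.
move=> p_ge0 _ t_ge0; rewrite /Lambda.
have [-> | [a amin]] := LambdaP_None_or_min_loser p w t predT predT; [by left | right].
have [/andP[_ loss_a] _] := amin.
have [i ai xsi] := dotb_lt_support p_ge0 loss_a.
have amin_i : min_loser p w t (fun x => ~~ x i) (fun x => x i) a.
  apply: (min_loser_restrict _ _ ai amin) => //.
  by apply: winner_restrict => //; rewrite ffunE.
by exists i; rewrite /Lambda_i (LambdaP_min_loser amin) (LambdaP_min_loser amin_i).
Qed.
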